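(* Let $U$ be a nonempty set, $\pi$ a fixed partition on $U$, and let $\mathcal{B}_\pi=\{\sigma\Rightarrow\pi:\sigma \text{ a partition on } U\}$. Let $\pi_{ns}$ be the set of blocks of $\pi$ with at least two elements. Then the map $\Phi:\mathcal{B}_\pi\to\wp(\pi_{ns})$ sending $\sigma\Rightarrow\pi$ to the set of blocks $B\in\pi_{ns}$ that are contained in some block of $\sigma$ is a well-defined bijection, and for all partitions $\sigma,\tau$ on $U$: (i) $(\sigma\Rightarrow\pi)\vee(\tau\Rightarrow\pi)\in\mathcal{B}_\pi$ and $\Phi$ of it equals $\Phi(\sigma\Rightarrow\pi)\cup\Phi(\tau\Rightarrow\pi)$; (ii) $(\sigma\Rightarrow\pi)\wedge(\tau\Rightarrow\pi)\in\mathcal{B}_\pi$ and $\Phi$ of it equals $\Phi(\sigma\Rightarrow\pi)\cap\Phi(\tau\Rightarrow\pi)$; (iii) $(\sigma\Rightarrow\pi)\Rightarrow(\tau\Rightarrow\pi)\in\mathcal{B}_\pi$ and $\Phi$ of it equals $(\pi_{ns}\setminus\Phi(\sigma\Rightarrow\pi))\cup\Phi(\tau\Rightarrow\pi)$; in particular $\Phi((\sigma\Rightarrow\pi)\Rightarrow\pi)=\pi_{ns}\setminus\Phi(\sigma\Rightarrow\pi)$; (iv) $\pi=\mathbf{1}\Rightarrow\pi\in\mathcal{B}_\pi$ with $\Phi(\pi)=\emptyset$ and $\mathbf{1}=\pi\Rightarrow\pi\in\mathcal{B}_\pi$ with $\Phi(\mathbf{1})=\pi_{ns}$. Consequently $\mathcal{B}_\pi$,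 with the partition join, meet, and $\pi$-negation $\overset{\pi}{\lnot}\sigma:=\sigma\Rightarrow\pi$ as complement, is a Boolean algebra isomorphic to $\wp(\pi_{ns})$, with bottom $\pi$ and top $\mathbf{1}$, contained in the interval $[\pi,\mathbf{1}]$ of the refinement order.
   Context: A partition on a set $U$ is a set of non-empty, pairwise disjoint subsets of $U$ (called blocks) whose union is $U$. Refinement: $\sigma\precsim\pi$ iff every block of $\pi$ is contained in some block of $\sigma$. The discrete partition is $\mathbf{1}=\{\{u\}:u\in U\}$ and the indiscrete partition is $\mathbf{0}=\{U\}$. The join $\pi\vee\sigma$ is the partition whose blocks are the non-empty intersections $B\cap C$, $B\in\pi$, $C\in\sigma$. The meet $\pi\wedge\sigma$ is the partition whose blocks are the equivalence classes of the equivalence relation on $U$ generated by: $u\sim u'$ if $u,u'$ lie in a common block of $\pi$ or in a common block of $\sigma$. The partition implication $\sigma\Rightarrow\pi$ is the partition obtained from $\pi$ by replacing every block $B\in\pi$ that is contained in some block of $\sigma$ by the singletons $\{u\}$, $u\in B$, and leaving every block of $\pi$ not contained in any block of $\sigma$ unchanged. *)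

(* Equality of sets/partitions is Leibniz equality of predicates
   (provable via functional/propositional extensionality). *)
From Stdlib Require Import Relations.

Set Implicit Arguments.

Section Partitions.
Variable U : Type.

Definition uset := U -> Prop.
Definition upart := uset -> Prop.

Definition subset (A B : uset) : Prop := forall u, A u -> B u.
Definition nonempty (A : uset) : Prop := exists u, A u.

Definition is_partition (P : upart) : Prop :=
  (forall B, P B -> nonempty B) /\
  (forall B C, P B -> P C -> (exists u, B u /\ C u) -> B = C) /\
  (forall u, exists B, P B /\ B u).

Definition refines (sigma pi : upart) : Prop :=
  forall B, pi B -> exists C, sigma C /\ subset B C.

Definition discrete : upart := fun B => exists u, B = (fun v => v = u).
Definition indiscrete : upart := fun B => B = (fun _ => True).

Definition pjoin (pi sigma : upart) : upart :=
  fun D => exists B C, pi B /\ sigma C /\ D = (fun u => B u /\ C u) /\ nonempty D.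

Definition meet_rel (pi sigma : upart) : relation U :=
  fun u v => exists B, (pi B \/ sigma B) /\ B u /\ B v.

Definition meet_eqv (pi sigma : upart) : relation U :=
  clos_refl_sym_trans U (meet_rel pi sigma).

Definition pmeet (pi sigma : upart) : upart :=
  fun D => exists u, D = meet_eqv pi sigma u.

Definition contained_in_block (sigma : upart) (B : uset) : Prop :=
  exists C, sigma C /\ subset B C.

Definition pimp (sigma pi : upart) : upart :=
  fun D => (pi D /\ ~ contained_in_block sigma D) \/
           (exists u, D = (fun v => v = u) /\
              exists B, pi B /\ B u /\ contained_in_block sigma B).

Definition Bpi (pi : upart) : upart -> Prop :=
  fun P => exists sigma, is_partition sigma /\ P = pimp sigma pi.

Definition pi_ns (pi : upart) : upart :=
  fun B => pi B /\ exists u v, B u /\ B v /\ u <> v.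

(* Phi (sigma => pi) = blocks of pi_ns contained in some block of sigma;
   defined on an element P of B_pi through some representing sigma
   (well-definedness is part of the theorem). *)
Definition Phi (pi : upart) (P : upart) : upart :=
  fun B => pi_ns pi B /\
    exists sigma, is_partition sigma /\ P = pimp sigma pi /\
                  contained_in_block sigma B.

Definition PhiS (pi sigma : upart) : upart :=
  fun B => pi_ns pi B /\ contained_in_block sigma B.

Definition set_union (S T : upart) : upart := fun B => S B \/ T B.
Definition set_inter (S T : upart) : upart := fun B => S B /\ T B.
Definition set_diff (S T : upart) : upart := fun B => S B /\ ~ T B.
Definition set_empty : upart := fun _ => False.
Definition set_subset (S T : upart) : Prop := forall B, S B -> T B.

End Partitions.

Arguments discrete {U}.
Arguments indiscrete {U}.
Arguments set_empty {U}.

From Stdlib Require Import Classical FunctionalExtensionality PropExtensionality Relations.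

(* For a set S of blocks of pi, let [split pi S] be the partition
   obtained from pi by breaking every block of S into singletons.  Its blocks
   are uniformly described as [sblock S B u] = "the points v of the pi-block B
   of u with (S B -> v = u)", which makes joins, meets and implications of
   split partitions a matter of propositional logic once the blocks being
   combined are rebased at a common point.  The bridge to the paper is [pimp_split]: sigma => pi is pi split
   along PhiS pi sigma.  On B_pi the map Phi is P |-> pi_ns \ P ([Phi_Bpi]),
   hence well defined, and S |-> split pi S is its inverse on subsets of
   pi_ns.  Finally join, meet and implication of split partitions are split
   partitions along union, intersection and relative complement; the main
   theorem just rewrites every sigma => pi into split form and reads off the
   claims. *)

Lemma pred_ext {X : Type} (P Q : X -> Prop) : (forall x, P x <-> Q x) -> P = Q.
Proof.
  intro h. apply functional_extensionality; intro x.
  apply propositional_extensionality; apply h.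
Qed.

Lemma union_subset {U : Type} (S T R : upart U) :
  set_subset S R -> set_subset T R -> set_subset (set_union S T) R.
Proof. intros hS hT B [h|h]; auto. Qed.

Lemma inter_subset {U : Type} (S T R : upart U) :
  set_subset S R -> set_subset (set_inter S T) R.
Proof. intros hS B [h _]; auto. Qed.

Lemma diff_subset {U : Type} (S T : upart U) : set_subset (set_diff S T) S.
Proof. intros B [h _]; exact h. Qed.

Lemma PhiS_subset {U : Type} (pi sigma : upart U) : set_subset (PhiS pi sigma) (pi_ns pi).
Proof. intros B [h _]; exact h. Qed.

Section SplitBlocks.
Context {U : Type} (pi : upart U).

Lemma ns_not_in_singleton B u : pi_ns pi B -> ~ subset B (fun v => v = u).
Proof.
  intros [_ [a [b [ha [hb hab]]]]] hsub. apply hab.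
  rewrite (hsub a ha), (hsub b hb). reflexivity.
Qed.

Lemma small_block B u : pi B -> ~ pi_ns pi B -> B u -> B = (fun v => v = u).
Proof.
  intros hB hsmall hu. apply pred_ext; intro v; split; intro hv.
  - apply NNPP; intro hne. apply hsmall. split; [exact hB|]. exists v, u; auto.
  - subst; exact hu.
Qed.

Lemma pimp_ns_block sigma B :
  pi_ns pi B -> (pimp sigma pi B <-> ~ contained_in_block sigma B).
Proof.
  intro hns. split.
  - intros [[_ hc]|[u [e _]]]; [exact hc|].
    exfalso. apply (ns_not_in_singleton B u hns). rewrite e. intros v hv; exact hv.
  - intro hc. left. split; [exact (proj1 hns)|exact hc].
Qed.

Lemma PhiS_eq sigma : PhiS pi sigma = set_diff (pi_ns pi) (pimp sigma pi).
Proof.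
  apply pred_ext; intro B. unfold PhiS, set_diff. split; intros [hns h]; split; auto.
  - intro hp. exact (proj1 (pimp_ns_block sigma B hns) hp h).
  - apply NNPP; intro hc. exact (h (proj2 (pimp_ns_block sigma B hns) hc)).
Qed.

(* Phi is well defined: on B_pi it is P |-> pi_ns \ P, whatever sigma
   represents P. *)
Lemma Phi_Bpi P : Bpi pi P -> Phi pi P = set_diff (pi_ns pi) P.
Proof.
  intros [sigma [hsigma ->]]. apply pred_ext; intro B. unfold Phi, set_diff. split.
  - intros [hns [sigma' [_ [e hc]]]]. split; [exact hns|].
    rewrite e. intro hp. exact (proj1 (pimp_ns_block sigma' B hns) hp hc).
  - intros [hns hn]. split; [exact hns|].
    exists sigma. split; [exact hsigma|]. split; [reflexivity|].
    apply NNPP; intro hc. exact (hn (proj2 (pimp_ns_block sigma B hns) hc)).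
Qed.

Hypothesis hpi : is_partition pi.

Lemma block_eq B C u : pi B -> pi C -> B u -> C u -> B = C.
Proof. intros hB hC hu hu'. destruct hpi as [_ [hdisj _]]. apply hdisj; eauto. Qed.

Lemma block_of u : exists B, pi B /\ B u.
Proof. destruct hpi as [_ [_ hcover]]. apply hcover. Qed.

Lemma block_point B : pi B -> exists u, B u.
Proof. destruct hpi as [hne _]. apply hne. Qed.

Definition sblock (S : upart U) (B : uset U) (u : U) : uset U :=
  fun v => B v /\ (S B -> v = u).

Definition split (S : upart U) : upart U :=
  fun D => exists B u, pi B /\ B u /\ D = sblock S B u.

Lemma sblock_kept S B u : ~ S B -> sblock S B u = B.
Proof. intro h. apply pred_ext; intro v. unfold sblock. tauto. Qed.

Lemma sblock_singleton S B u :
  pi B -> B u -> S B \/ ~ pi_ns pi B -> sblock S B u = (fun v => v = u).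
Proof.
  intros hB hu [hS|hsmall].
  - apply pred_ext; intro v. unfold sblock. split; [tauto|intros ->; auto].
  - rewrite (small_block B u hB hsmall hu).
    apply pred_ext; intro v. unfold sblock. tauto.
Qed.

Lemma sblock_at S B u w : sblock S B u w -> sblock S B u = sblock S B w.
Proof.
  intros [_ h]. destruct (classic (S B)) as [hS|hS].
  - rewrite (h hS). reflexivity.
  - rewrite !sblock_kept by exact hS. reflexivity.
Qed.

Lemma split_block_at S D w :
  split S D -> D w -> exists B, pi B /\ B w /\ D = sblock S B w.
Proof.
  intros [B [u [hB [hu ->]]]] hw.
  exists B. split; [exact hB|]. split; [exact (proj1 hw)|]. apply sblock_at; exact hw.
Qed.

Lemma split_partition S : is_partition (split S).
Proof.
  split; [|split].
  - intros D [B [u [_ [hu ->]]]]. exists u. split; auto.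
  - intros D D' hD hD' [w [hw hw']].
    destruct (split_block_at S D w hD hw) as [B [hB [hBw ->]]].
    destruct (split_block_at S D' w hD' hw') as [C [hC [hCw ->]]].
    rewrite (block_eq B C w hB hC hBw hCw). reflexivity.
  - intro u. destruct (block_of u) as [B [hB hu]].
    exists (sblock S B u). split; [exists B, u; repeat split; assumption|split; auto].
Qed.

Lemma singleton_contained S u : contained_in_block (split S) (fun v => v = u).
Proof.
  destruct (proj2 (proj2 (split_partition S)) u) as [D [hD hu]].
  exists D. split; [exact hD|]. intros v ->; exact hu.
Qed.

Lemma contained_split_block S B :
  pi B -> (contained_in_block (split S) B <-> ~ (pi_ns pi B /\ S B)).
Proof.
  intro hB. split.
  - intros [D [hD hsub]] [hns hS].
    destruct (block_point B hB) as [a ha].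
    destruct (split_block_at S D a hD (hsub a ha)) as [C [hC [hCa ->]]].
    pose proof (block_eq B C a hB hC ha hCa) as e. subst C.
    apply (ns_not_in_singleton B a hns). intros v hv. exact (proj2 (hsub v hv) hS).
  - intro h. destruct (block_point B hB) as [u hu].
    destruct (classic (S B)) as [hS|hS].
    + rewrite (small_block B u hB (fun hns => h (conj hns hS)) hu).
      apply singleton_contained.
    + exists B. split; [|intros v hv; exact hv].
      exists B, u. split; [exact hB|split; [exact hu|]].
      symmetry. apply sblock_kept; exact hS.
Qed.

Lemma contained_sblock S T B u : pi B -> B u ->
  (contained_in_block (split S) (sblock T B u) <-> ~ (pi_ns pi B /\ S B /\ ~ T B)).
Proof.
  intros hB hu. destruct (classic (T B)) as [hT|hT].
  - rewrite (sblock_singleton T B u hB hu (or_introl hT)).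
    split; [tauto|intros _; apply singleton_contained].
  - rewrite (sblock_kept T B u hT).
    pose proof (contained_split_block S B hB). tauto.
Qed.

Lemma split_ns_block S B : pi_ns pi B -> (split S B <-> ~ S B).
Proof.
  intro hns. split.
  - intros [C [u [hC [hu eB]]]] hS.
    pose proof hns as [hB [a [_ [ha _]]]].
    assert (hCa : C a) by (rewrite eB in ha; exact (proj1 ha)).
    pose proof (block_eq B C a hB hC ha hCa) as e. subst C.
    apply (ns_not_in_singleton B u hns). intros v hv.
    rewrite eB in hv. exact (proj2 hv hS).
  - intro hS. destruct hns as [hB [u [_ [hu _]]]].
    exists B, u. split; [exact hB|split; [exact hu|]].
    symmetry. apply sblock_kept; exact hS.
Qed.

Lemma PhiS_split S : PhiS pi (split S) = set_diff (pi_ns pi) S.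
Proof.
  apply pred_ext; intro B. unfold PhiS, set_diff. split.
  - intros [hns hc]. split; [exact hns|]. intro hS.
    exact (proj1 (contained_split_block S B (proj1 hns)) hc (conj hns hS)).
  - intros [hns hS]. split; [exact hns|].
    apply (contained_split_block S B (proj1 hns)). tauto.
Qed.

Lemma pimp_split sigma : pimp sigma pi = split (PhiS pi sigma).
Proof.
  apply pred_ext; intro D. split.
  - intros [[hD hc]|[u [-> [B [hB [hu hc]]]]]].
    + destruct (block_point D hD) as [u hu]. exists D, u.
      split; [exact hD|split; [exact hu|]].
      symmetry. apply sblock_kept. intros [_ h]; exact (hc h).
    + exists B, u. split; [exact hB|split; [exact hu|]].
      symmetry. apply sblock_singleton; [exact hB|exact hu|].
      destruct (classic (pi_ns pi B)); [left; split|right]; assumption.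
  - intros [B [u [hB [hu ->]]]].
    destruct (classic (contained_in_block sigma B)) as [hc|hc].
    + right. exists u. split; [|exists B; auto].
      apply sblock_singleton; [exact hB|exact hu|].
      destruct (classic (pi_ns pi B)); [left; split|right]; assumption.
    + left. rewrite sblock_kept by (intros [_ h]; exact (hc h)). auto.
Qed.

Lemma Bpi_split P : Bpi pi P -> P = split (Phi pi P).
Proof.
  intro hP. rewrite (Phi_Bpi P hP). destruct hP as [sigma [_ ->]].
  rewrite <- PhiS_eq. apply pimp_split.
Qed.

(* Conversely split S lies in B_pi, represented by split (pi_ns \ S). *)
Lemma split_Bpi S : set_subset S (pi_ns pi) -> Bpi pi (split S).
Proof.
  intro hS. exists (split (set_diff (pi_ns pi) S)). split; [apply split_partition|].
  rewrite pimp_split, PhiS_split. f_equal.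
  apply pred_ext; intro B. unfold set_diff. split.
  - intro h. split; [exact (hS B h)|tauto].
  - intros [hns h]. apply NNPP; intro hn. exact (h (conj hns hn)).
Qed.

Lemma Phi_split S : set_subset S (pi_ns pi) -> Phi pi (split S) = S.
Proof.
  intro hS. rewrite (Phi_Bpi _ (split_Bpi S hS)).
  apply pred_ext; intro B. unfold set_diff. split.
  - intros [hns h]. apply NNPP; intro hn. exact (h (proj2 (split_ns_block S B hns) hn)).
  - intro h. split; [exact (hS B h)|].
    intro hsplit. exact (proj1 (split_ns_block S B (hS B h)) hsplit h).
Qed.

Lemma split_join S T : pjoin (split S) (split T) = split (set_union S T).
Proof.
  apply pred_ext; intro D. split.
  - intros [C [C' [hC [hC' [-> [w [hw hw']]]]]]].
    destruct (split_block_at S C w hC hw) as [B [hB [hBw ->]]].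
    destruct (split_block_at T C' w hC' hw') as [B' [hB' [hB'w ->]]].
    pose proof (block_eq B B' w hB hB' hBw hB'w) as e. subst B'.
    exists B, w. split; [exact hB|split; [exact hBw|]].
    apply pred_ext; intro v. unfold sblock, set_union. tauto.
  - intros [B [u [hB [hu ->]]]]. exists (sblock S B u), (sblock T B u).
    split; [exists B, u; repeat split; assumption|].
    split; [exists B, u; repeat split; assumption|].
    split.
    + apply pred_ext; intro v. unfold sblock, set_union. tauto.
    + exists u. repeat split; assumption.
Qed.

Lemma meet_eqv_split S T u v :
  meet_eqv (split S) (split T) u v <->
  u = v \/ exists B, pi B /\ B u /\ B v /\ ~ (S B /\ T B).
Proof.
  split.
  - intro h. induction h as [x y [D [hD [hx hy]]] | x | x y _ IH | x y z _ IH1 _ IH2].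
    + destruct hD as [hD|hD];
        [destruct (split_block_at S D x hD hx) as [B [hB [hBx ->]]]
        |destruct (split_block_at T D x hD hx) as [B [hB [hBx ->]]]];
        destruct hy as [hBy hsel];
        (destruct (classic (S B /\ T B)) as [hST|hST];
         [left; symmetry; apply hsel; tauto
         |right; exists B; repeat split; assumption]).
    + left; reflexivity.
    + destruct IH as [e|[B [hB [h1 [h2 h3]]]]];
        [left; symmetry; exact e|right; exists B; repeat split; assumption].
    + destruct IH1 as [->|[B [hB [h1 [h2 h3]]]]]; [exact IH2|].
      destruct IH2 as [<-|[C [hC [k1 [k2 k3]]]]];
        [right; exists B; repeat split; assumption|].
      pose proof (block_eq B C y hB hC h2 k1) as e. subst C.
      right; exists B; repeat split; assumption.
  - intros [<-|[B [hB [hu [hv hST]]]]]; [apply rst_refl|].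
    apply rst_step. exists B. split; [|split; assumption].
    destruct (classic (S B)) as [hS|hS].
    + right. exists B, u. split; [exact hB|split; [exact hu|]].
      symmetry. apply sblock_kept. tauto.
    + left. exists B, u. split; [exact hB|split; [exact hu|]].
      symmetry. apply sblock_kept. exact hS.
Qed.

Lemma meet_class S T B u : pi B -> B u ->
  meet_eqv (split S) (split T) u = sblock (set_inter S T) B u.
Proof.
  intros hB hu. apply pred_ext; intro v. split; intro h.
  - apply meet_eqv_split in h. destruct h as [<-|[C [hC [hCu [hCv hST]]]]].
    + split; auto.
    + pose proof (block_eq B C u hB hC hu hCu) as e. subst C.
      unfold sblock, set_inter. tauto.
  - apply meet_eqv_split. destruct h as [hv hsel].
    destruct (classic (S B /\ T B)) as [hST|hST].
    + left. symmetry. exact (hsel hST).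
    + right. exists B. repeat split; assumption.
Qed.

Lemma split_meet S T : pmeet (split S) (split T) = split (set_inter S T).
Proof.
  apply pred_ext; intro D. split.
  - intros [u ->]. destruct (block_of u) as [B [hB hu]].
    exists B, u. split; [exact hB|split; [exact hu|]]. apply meet_class; assumption.
  - intros [B [u [hB [hu ->]]]]. exists u. symmetry. apply meet_class; assumption.
Qed.

(* Implication of split partitions splits along (pi_ns \ S) \/ T: a block of
   split T becomes singletons iff it lies in a block of split S. *)
Lemma split_imp S T :
  pimp (split S) (split T) = split (set_union (set_diff (pi_ns pi) S) T).
Proof.
  apply pred_ext; intro D. split.
  - intros [[hD hc]|[u [-> [C [hC [hu hc]]]]]].
    + destruct hD as [B [u [hB [hu ->]]]].
      assert (hsel : pi_ns pi B /\ S B /\ ~ T B).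
      { apply NNPP; intro h. exact (hc (proj2 (contained_sblock S T B u hB hu) h)). }
      exists B, u. split; [exact hB|split; [exact hu|]].
      rewrite (sblock_kept T B u), (sblock_kept _ B u); [reflexivity|..];
        unfold set_union, set_diff; tauto.
    + destruct (split_block_at T C u hC hu) as [B [hB [hBu ->]]].
      pose proof (proj1 (contained_sblock S T B u hB hBu) hc) as hnsel.
      exists B, u. split; [exact hB|split; [exact hBu|]].
      symmetry. apply sblock_singleton; [exact hB|exact hBu|].
      destruct (classic (pi_ns pi B)) as [hns|hns]; [left|right; exact hns].
      unfold set_union, set_diff.
      destruct (classic (T B)) as [hT|hT]; [right; exact hT|left; tauto].
  - intros [B [u [hB [hu ->]]]].
    destruct (classic (pi_ns pi B /\ S B /\ ~ T B)) as [hsel|hsel].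
    + left. rewrite sblock_kept by (unfold set_union, set_diff; tauto). split.
      * exists B, u. split; [exact hB|split; [exact hu|]].
        symmetry. apply sblock_kept. tauto.
      * intro hc. apply (proj1 (contained_split_block S B hB) hc). tauto.
    + right. exists u. split.
      * apply sblock_singleton; [exact hB|exact hu|].
        destruct (classic (pi_ns pi B)) as [hns|hns]; [left|right; exact hns].
        unfold set_union, set_diff. destruct (classic (T B)); tauto.
      * exists (sblock T B u). split; [exists B, u; repeat split; assumption|].
        split; [split; [exact hu|intros _; reflexivity]|].
        apply (contained_sblock S T B u hB hu). exact hsel.
Qed.

Lemma split_empty : split set_empty = pi.
Proof.
  apply pred_ext; intro D. split.
  - intros [B [u [hB [_ ->]]]]. rewrite sblock_kept by (intro h; exact h). exact hB.
  - intro hD. destruct (block_point D hD) as [u hu].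
    exists D, u. split; [exact hD|split; [exact hu|]].
    symmetry. apply sblock_kept. intro h; exact h.
Qed.

Lemma split_ns : split (pi_ns pi) = discrete.
Proof.
  apply pred_ext; intro D. split.
  - intros [B [u [hB [hu ->]]]]. exists u. apply sblock_singleton; try assumption.
    apply classic.
  - intros [u ->]. destruct (block_of u) as [B [hB hu]].
    exists B, u. split; [exact hB|split; [exact hu|]].
    symmetry. apply sblock_singleton; try assumption. apply classic.
Qed.

Lemma PhiS_discrete : PhiS pi discrete = set_empty.
Proof.
  apply pred_ext; intro B. split; [|intros []].
  intros [hns [C [[u ->] hsub]]]. exact (ns_not_in_singleton B u hns hsub).
Qed.

Lemma PhiS_self : PhiS pi pi = pi_ns pi.
Proof.
  apply pred_ext; intro B. split; [intros [hns _]; exact hns|].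
  intro hns. split; [exact hns|].
  exists B. split; [exact (proj1 hns)|intros v hv; exact hv].
Qed.

Lemma split_interval S : refines pi (split S) /\ refines (split S) discrete.
Proof.
  split.
  - intros D [B [u [hB [_ ->]]]]. exists B. split; [exact hB|intros v [hv _]; exact hv].
  - intros D [u ->]. apply singleton_contained.
Qed.

End SplitBlocks.

Theorem mainTheorem4 (U : Type) (hU : inhabited U) (pi : upart U)
  (hpi : is_partition pi) :
  (forall sigma, is_partition sigma -> Phi pi (pimp sigma pi) = PhiS pi sigma) /\
  (forall P, Bpi pi P -> set_subset (Phi pi P) (pi_ns pi)) /\
  (forall P Q, Bpi pi P -> Bpi pi Q -> Phi pi P = Phi pi Q -> P = Q) /\
  (forall S, set_subset S (pi_ns pi) -> exists P, Bpi pi P /\ Phi pi P = S) /\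
  (forall sigma tau, is_partition sigma -> is_partition tau ->
    (Bpi pi (pjoin (pimp sigma pi) (pimp tau pi)) /\
     Phi pi (pjoin (pimp sigma pi) (pimp tau pi)) =
       set_union (Phi pi (pimp sigma pi)) (Phi pi (pimp tau pi))) /\
    (Bpi pi (pmeet (pimp sigma pi) (pimp tau pi)) /\
     Phi pi (pmeet (pimp sigma pi) (pimp tau pi)) =
       set_inter (Phi pi (pimp sigma pi)) (Phi pi (pimp tau pi))) /\
    (Bpi pi (pimp (pimp sigma pi) (pimp tau pi)) /\
     Phi pi (pimp (pimp sigma pi) (pimp tau pi)) =
       set_union (set_diff (pi_ns pi) (Phi pi (pimp sigma pi)))
                 (Phi pi (pimp tau pi))) /\
    Phi pi (pimp (pimp sigma pi) pi) =
       set_diff (pi_ns pi) (Phi pi (pimp sigma pi))) /\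
  (pi = pimp discrete pi /\ Bpi pi pi /\ Phi pi pi = set_empty) /\
  (discrete = pimp pi pi /\ Bpi pi discrete /\ Phi pi discrete = pi_ns pi) /\
  (forall P, Bpi pi P -> refines pi P /\ refines P discrete).
Proof.
  assert (hPhi : forall sigma, is_partition sigma -> Phi pi (pimp sigma pi) = PhiS pi sigma).
  { intros sigma hsigma. rewrite (Phi_Bpi pi (pimp sigma pi)) by (exists sigma; auto).
    symmetry. apply PhiS_eq. }
  assert (hsplit : forall S, set_subset S (pi_ns pi) ->
                   Bpi pi (split pi S) /\ Phi pi (split pi S) = S).
  { intros S hS. split; [apply split_Bpi|apply Phi_split]; assumption. }
  split; [exact hPhi|].
  split; [intros P _ B [hB _]; exact hB|].
  split.
  { intros P Q hP hQ e. rewrite (Bpi_split pi hpi P hP), (Bpi_split pi hpi Q hQ), e.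
    reflexivity. }
  split; [intros S hS; exists (split pi S); exact (hsplit S hS)|].
  split.
  { intros sigma tau hsigma htau.
    rewrite (hPhi sigma hsigma), (hPhi tau htau),
      (pimp_split pi hpi sigma), (pimp_split pi hpi tau), (pimp_split pi hpi (split pi _)),
      PhiS_split, split_join, split_meet, split_imp by exact hpi.
    pose proof (PhiS_subset pi sigma) as hS. pose proof (PhiS_subset pi tau) as hT.
    repeat split; try apply hsplit; auto using union_subset, inter_subset, diff_subset. }
  split.
  { assert (e : pimp discrete pi = pi)
      by (rewrite (pimp_split pi hpi), PhiS_discrete; exact (split_empty pi hpi)).
    split; [symmetry; exact e|]. split.
    - exists discrete. split; [rewrite <- (split_ns pi hpi); apply split_partition; exact hpi|].
      symmetry; exact e.
    - rewrite <- e at 2. rewrite (hPhi discrete); [apply PhiS_discrete|].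
      rewrite <- (split_ns pi hpi). apply split_partition; exact hpi. }
  split.
  { assert (e : pimp pi pi = discrete)
      by (rewrite (pimp_split pi hpi), PhiS_self; exact (split_ns pi hpi)).
    split; [symmetry; exact e|]. split.
    - exists pi. split; [exact hpi|symmetry; exact e].
    - rewrite <- e, (hPhi pi hpi). apply PhiS_self. }
  intros P hP. rewrite (Bpi_split pi hpi P hP). apply split_interval; exact hpi.
Qed.
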